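(* Define $c(2)=1$, $c(3)=2$, $c(4)=4$ and $c(n)=10-n$ for $n\ge 5$. For every $n\ge 2$ and every $\mathbf a\in\mathbb{R}^n$ with $N(\mathbf a)\ge 2$, $$Z(J_{n,2}J_{n,1}\mathbf a)\le \binom{n+1}{3}-nN(\mathbf a)+n+c(n).$$
   Context: For a real vector $\mathbf x$, $N(\mathbf x)$ and $Z(\mathbf x)$ denote the numbers of negative and zero components. For $d\ge 0$, $J_{n,d}$ is the matrix, with respect to the bases of degree-$d$ and degree-$(d+1)$ monomials in $x_1,\dots,x_n$ in left lexicographic order, of the linear map $A(x)\mapsto A(x)(x_1+\cdots+x_n)$. Thus $J_{n,2}J_{n,1}\mathbf a$ is the coefficient vector of $(a_1x_1+\cdots+a_nx_n)(x_1+\cdots+x_n)^2$. *)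

From HB Require Import structures.
From mathcomp Require Import all_boot all_order all_algebra.
From mathcomp Require Import reals.
Set Implicit Arguments. Unset Strict Implicit. Unset Printing Implicit Defensive.
Import Order.TTheory GRing.Theory Num.Theory.
Local Open Scope ring_scope.

(* Monomials in x_1..x_n are represented by exponent vectors
   m : {ffun 'I_n -> nat}; a coefficient vector (w.r.t. the monomial basis)
   is a function from exponent vectors to R (only its values on monomials of
   the relevant degree matter). *)
Definition expo (n : nat) := {ffun 'I_n -> nat}.

Definition evar (n : nat) (i : 'I_n) : expo n := [ffun j => nat_of_bool (j == i)].

(* m / x_i  (only used when m i > 0) *)
Definition ediv (n : nat) (m : expo n) (i : 'I_n) : expo n :=
  [ffun j => (m j - nat_of_bool (j == i))%N].

Definition linvec (R : ringType) (n : nat) (a : 'I_n -> R) : expo n -> R :=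
  fun m => \sum_(i < n) (if m == evar i then a i else 0).

(* The map J_{n,d}: A(x) |-> A(x)(x_1+...+x_n) on coefficient vectors:
   the coefficient of the monomial m in A(x)(x_1+...+x_n) is the sum over the
   variables x_i dividing m of the coefficient of m/x_i in A.  Entry (m', m) of
   the matrix J_{n,d} is 1 iff m' = m x_i for some i, and 0 otherwise. *)
Definition Jmul (R : ringType) (n : nat) (f : expo n -> R) : expo n -> R :=
  fun m => \sum_(i < n | (0 < m i)%N) f (ediv m i).

Definition Zdeg (R : ringType) (n d : nat) (v : expo n -> R) : nat :=
  #|[set m : {ffun 'I_n -> 'I_d.+1} |
      ((\sum_(i < n) (m i : nat))%N == d) && (v [ffun j => (m j : nat)] == 0)]|.

Definition Nneg (R : numDomainType) (n : nat) (a : 'I_n -> R) : nat :=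
  #|[set i : 'I_n | a i < 0]|.

Definition cst (n : nat) : int :=
  if n == 2%N then 1 else if n == 3%N then 2 else if n == 4%N then 4
  else 10%:Z - n%:Z.

From HB Require Import structures.
From mathcomp Require Import all_boot all_order all_algebra.
From mathcomp Require Import reals.
From mathcomp Require Import zify.
From mathcomp.algebra_tactics Require Import ring lra.
Set Implicit Arguments. Unset Strict Implicit. Unset Printing Implicit Defensive.
Import Order.TTheory GRing.Theory Num.Theory.
Local Open Scope ring_scope.

(* The coefficient of a cubic monomial x^mu in (sum_i a_i x_i)(sum_i x_i)^2 is
   the sum of a_k over the ordered factorisations x^mu = x_i x_j x_k; since
   permuting the positions permutes these factorisations, three times the
   coefficient is their number times sum_l mu_l a_l.  So Z counts the cubic
   monomials of weight sum_l mu_l a_l = 0.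
   These are counted by induction on n, splitting off a largest entry x >= 0
   of a.  The monomials avoiding x are bounded by induction, x^3 has weight
   zero only if x = 0, and the monomials x m and x^2 m of weight zero number
   at most C(n+1, 2) - N - [x = 0]: no m made of nonnegative variables only
   qualifies when x > 0, and adding the negative variables one at a time, each
   one loses at least one of its new candidates.  Pascal's rule
   C(n+2, 3) = C(n+1, 3) + C(n+1, 2) then carries the bound from n to n + 1. *)

Section Monomials.
Variable n : nat.
Implicit Types (m : expo n) (i j k l : 'I_n).

Definition emul m i : expo n := [ffun l => (m l + (l == i))%N].

Lemma emulK m i : ediv (emul m i) i = m.
Proof. by apply/ffunP => l; rewrite !ffunE addnK. Qed.

Lemma edivK m i : (0 < m i)%N -> emul (ediv m i) i = m.
Proof.
move=> m_gt0; apply/ffunP => l; rewrite !ffunE.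
by case: eqP => [->|_]; rewrite ?subn1 ?addn1 ?prednK ?subn0 ?addn0.
Qed.

Lemma ediv_eq m m' i : (0 < m i)%N -> (ediv m i == m') = (m == emul m' i).
Proof.
by move=> m_gt0; apply/eqP/eqP => [<-|->]; rewrite ?edivK ?emulK.
Qed.

Lemma emul_gt0 m i : (0 < emul m i i)%N.
Proof. by rewrite ffunE eqxx addn1. Qed.

Lemma emulC m i j : emul (emul m i) j = emul (emul m j) i.
Proof. by apply/ffunP => l; rewrite !ffunE addnAC. Qed.

Lemma emul_evarC j k : emul (evar k) j = emul (evar j) k.
Proof. by apply/ffunP => l; rewrite !ffunE addnC. Qed.

Lemma sum_evar i : (\sum_l evar i l)%N = 1%N.
Proof.
rewrite (bigD1 i) //= ffunE eqxx big1 // => l /negbTE li.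
by rewrite ffunE li.
Qed.

Lemma sum_emul m i : (\sum_l emul m i l = (\sum_l m l).+1)%N.
Proof.
rewrite -addn1 -(sum_evar i) -big_split.
by apply: eq_bigr => l _; rewrite !ffunE.
Qed.

Lemma expo_decomp m d : (\sum_l m l)%N = d.+1 ->
  exists2 i, m = emul (ediv m i) i & (\sum_l ediv m i l)%N = d.
Proof.
move=> sum_m.
have : (\sum_l m l != 0)%N by rewrite sum_m.
rewrite sum_nat_eq0 negb_forall => /existsP[i]; rewrite -lt0n => m_gt0.
exists i; first by rewrite edivK.
by apply/succn_inj; rewrite -sum_m -(sum_emul _ i) edivK.
Qed.

Lemma expo3E m : (\sum_l m l = 3)%N ->
  exists i j k, m = emul (emul (evar k) j) i.
Proof.
move=> /expo_decomp[i Ei /expo_decomp[j Ej /expo_decomp[k Ek /eqP]]].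
rewrite sum_nat_eq0 => /forallP m0; exists i, j, k.
rewrite Ei Ej Ek; congr (emul (emul _ j) i).
by apply/ffunP => l; move: (m0 l); rewrite !ffunE => /eqP ->.
Qed.

Lemma emul_eqF m m' i : m i = 0%N -> (m == emul m' i) = false.
Proof.
by move=> m_i0; apply: contra_eqF (emul_gt0 m' i) => /eqP <-; rewrite m_i0.
Qed.
End Monomials.

Definition wsum (R : nzRingType) n (a : 'I_n -> R) (m : expo n) : R :=
  \sum_l (m l)%:R * a l.

Section Coefficients.
Variables (R : comNzRingType) (n : nat) (a : 'I_n -> R).
Implicit Types (m : expo n) (i j k l : 'I_n).

Lemma wsum_emul m i : wsum a (emul m i) = wsum a m + a i.
Proof.
rewrite /wsum (bigD1 i) //= [in RHS](bigD1 i) //= ffunE eqxx natrD mulrDl.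
rewrite mul1r addrAC; congr (_ + _ + _); apply: eq_bigr => l /negbTE li.
by rewrite ffunE li addn0.
Qed.

Lemma wsum_evar k : wsum a (evar k) = a k.
Proof.
rewrite /wsum (bigD1 k) //= ffunE eqxx mul1r big1 ?addr0 // => l /negbTE lk.
by rewrite ffunE lk mul0r.
Qed.

Lemma Jmul2_linvecE mu : Jmul (Jmul (linvec a)) mu =
  \sum_i \sum_j \sum_k (if mu == emul (emul (evar k) j) i then a k else 0).
Proof.
rewrite /Jmul big_mkcond; apply: eq_bigr => i _.
have [mu_i0|mu_i_gt0] := posnP (mu i).
  by rewrite big1 // => j _; rewrite big1 // => k _; rewrite emul_eqF.
rewrite big_mkcond; apply: eq_bigr => j _.
have [mu_j0|mu_j_gt0] := posnP (ediv mu i j).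
  by rewrite big1 // => k _; rewrite -ediv_eq // emul_eqF.
by rewrite /linvec; apply: eq_bigr => k _; rewrite !ediv_eq.
Qed.

Lemma Jmul2_linvec_mul3 mu : 3%:R * Jmul (Jmul (linvec a)) mu =
  (\sum_i \sum_j \sum_k (mu == emul (emul (evar k) j) i))%:R * wsum a mu.
Proof.
(* Swapping positions permutes the factorisations mu = x_i x_j x_k, so a_k may
   be replaced by a_j or a_i; the three versions add up to wsum a mu. *)
pose T i j k := mu == emul (emul (evar k) j) i.
have sym_jk i j k : T i k j = T i j k by rewrite /T emul_evarC.
have sym_ik i j k : T k j i = T i j k.
  by rewrite /T emulC emul_evarC emulC.
have sum_rev (X : 'I_n -> 'I_n -> 'I_n -> R) :
    \sum_i \sum_j \sum_k X i j k = \sum_k \sum_j \sum_i X i j k.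
  under eq_bigr do rewrite exchange_big.
  by rewrite exchange_big; under eq_bigr do rewrite exchange_big.
rewrite Jmul2_linvecE; set A := \sum_i _.
have A_j : A = \sum_i \sum_j \sum_k (if T i j k then a j else 0).
  apply: eq_bigr => i _; rewrite [RHS]exchange_big.
  by apply: eq_bigr => j _; apply: eq_bigr => k _; rewrite sym_jk.
have A_i : A = \sum_i \sum_j \sum_k (if T i j k then a i else 0).
  rewrite [RHS]sum_rev; apply: eq_bigr => i _; apply: eq_bigr => j _.
  by apply: eq_bigr => k _; rewrite sym_ik.
have -> : 3%:R * A = A + A + A by ring.
rewrite {1}A_i {2}A_j natr_sum mulr_suml -!big_split; apply: eq_bigr => i _.
rewrite natr_sum mulr_suml -!big_split; apply: eq_bigr => j _.
rewrite natr_sum mulr_suml -!big_split; apply: eq_bigr => k _ /=.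
rewrite /T; case: eqP => [->|_]; last by rewrite !addr0 mul0r.
by rewrite mul1r !wsum_emul wsum_evar; ring.
Qed.
End Coefficients.

Lemma Jmul2_linvec_eq0 (R : numDomainType) n (a : 'I_n -> R) (mu : expo n) :
  (\sum_l mu l = 3)%N -> (Jmul (Jmul (linvec a)) mu == 0) = (wsum a mu == 0).
Proof.
move=> /expo3E[i0 [j0 [k0 mu_ijk]]].
have N_gt0 : (0 < \sum_i \sum_j \sum_k (mu == emul (emul (evar k) j) i))%N.
  by rewrite (bigD1 i0) //= (bigD1 j0) //= (bigD1 k0) //= mu_ijk eqxx.
have reg3 : GRing.lreg (3%:R : R) by apply/lregP; rewrite pnatr_eq0.
rewrite -(mulrI_eq0 _ reg3) Jmul2_linvec_mul3 mulf_eq0 pnatr_eq0.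
by rewrite eqn0Ngt N_gt0.
Qed.

Section FfunCons.
Variables (T : Type) (n : nat).

Definition ffun_cons (x : T) (f : {ffun 'I_n -> T}) : {ffun 'I_n.+1 -> T} :=
  [ffun i => if unlift ord0 i is Some j then f j else x].

Lemma ffun_cons0 x f : ffun_cons x f ord0 = x.
Proof. by rewrite ffunE unlift_none. Qed.

Lemma ffun_consS x f j : ffun_cons x f (lift ord0 j) = f j.
Proof. by rewrite ffunE liftK. Qed.
End FfunCons.

Lemma big_ffunS (R : Type) (idx : R) (op : Monoid.com_law idx) (T : finType) n
    (F : {ffun 'I_n.+1 -> T} -> R) :
  \big[op/idx]_f F f = \big[op/idx]_x \big[op/idx]_g F (ffun_cons x g).
Proof.
pose uncons (f : {ffun 'I_n.+1 -> T}) := (f ord0, [ffun j => f (lift ord0 j)]).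
have consK : cancel (fun p => ffun_cons p.1 p.2) uncons.
  move=> [x g]; rewrite /uncons ffun_cons0; congr (_, _).
  by apply/ffunP => j; rewrite ffunE ffun_consS.
have unconsK : cancel uncons (fun p => ffun_cons p.1 p.2).
  move=> f; apply/ffunP => i; rewrite ffunE /=.
  by case: unliftP => [j ->|->]; rewrite ?ffunE.
rewrite (reindex (fun p => ffun_cons p.1 p.2)) /=; last first.
  by exists uncons => p _; [apply: consK | apply: unconsK].
by rewrite pair_bigA.
Qed.

Section SolutionCount.
Variable R : nzRingType.
Implicit Types (s l p b : seq R) (d : nat) (t x y : R).

(* [nsol s d t] counts the exponent vectors e, with entries in [0, 3], such
   that sum_i e_i = d and sum_i e_i s_i = t. *)
Fixpoint nsol s d t : nat :=
  if s is y :: s' then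
    (\sum_(e < 4 | (e <= d)%N) nsol s' (d - e) (t - (e : nat)%:R * y))%N
  else (d == 0%N) && (t == 0).

Lemma nsol0 s t : nsol s 0 t = (t == 0).
Proof.
elim: s t => [|y s IH] t //=.
by rewrite big_mkcond !big_ord_recl big_ord0 /= IH mul0r subr0 !addn0.
Qed.

Lemma nsol1 s t : nsol s 1 t = count (pred1 t) s.
Proof.
elim: s => [|y s IH] //=.
rewrite big_mkcond !big_ord_recl big_ord0 /= nsol0 mul0r mul1r subr0 subn0 IH.
by rewrite subr_eq0 eq_sym !addn0 addnC.
Qed.

Lemma nsol2_cons y s t :
  nsol (y :: s) 2 t = (nsol s 2 t + nsol s 1 (t - y)%R + (t == 2%:R * y)%R)%N.
Proof.
rewrite /= big_mkcond !big_ord_recl big_ord0 /= nsol0 mul0r subr0 mul1r.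
by rewrite subr_eq0 !addn0 addnA.
Qed.

Lemma nsol3_cons y s t : nsol (y :: s) 3 t =
  (nsol s 3 t + nsol s 2 (t - y)%R + nsol s 1 (t - 2%:R * y)%R
   + (t == 3%:R * y)%R)%N.
Proof.
rewrite /= big_mkcond !big_ord_recl big_ord0 /= nsol0 mul0r subr0 mul1r.
by rewrite subr_eq0 !addn0 !addnA.
Qed.

Lemma nsol_swap x y s d t : nsol [:: x, y & s] d t = nsol [:: y, x & s] d t.
Proof.
have pair_sum u v : nsol [:: u, v & s] d t = (\sum_(e1 < 4) \sum_(e2 < 4)
    if (e1 + e2 <= d)%N then
      nsol s (d - e1 - e2) (t - (e1 : nat)%:R * u - (e2 : nat)%:R * v)
    else 0)%N.
  rewrite /= big_mkcond; apply: eq_bigr => e1 _.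
  case: ifP => h1; last by rewrite big1 // => e2 _; case: ifP => //; lia.
  rewrite big_mkcond; apply: eq_bigr => e2 _.
  by rewrite -subnDA leq_subRL.
rewrite !pair_sum exchange_big; apply: eq_bigr => e2 _; apply: eq_bigr => e1 _.
by rewrite addnC subnAC addrAC.
Qed.

Lemma nsol_perm s1 s2 : perm_eq s1 s2 -> nsol s1 =2 nsol s2.
Proof.
elim: s1 s2 => [|x s1 IH] s2 s12 d t.
  by move: (perm_size s12) => /esym/size0nil ->.
have xs2 : x \in s2 by rewrite -(perm_mem s12) mem_head.
have {IH}IH : nsol s1 =2 nsol (rem x s2).
  by apply: IH; rewrite -(perm_cons x) (perm_trans s12) // perm_to_rem.
suff -> : nsol s2 d t = nsol (x :: rem x s2) d t.
  by rewrite /=; apply: eq_bigr => e _; apply: IH.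
elim: s2 xs2 {s12 IH} d t => [|y s2 IH] // xs2 d t.
have [<-|yx] := eqVneq y x; first by rewrite [rem _ _]/= eqxx.
have {}xs2 : x \in s2 by move: xs2; rewrite inE eq_sym (negbTE yx).
rewrite [rem _ _]/= (negbTE yx) nsol_swap /=.
by apply: eq_bigr => e _; apply: IH.
Qed.

Lemma nsol1_le s t : (nsol s 1 t <= size s)%N.
Proof. by rewrite nsol1 count_size. Qed.

Lemma nsol2_le s t : (nsol s 2 t <= 'C((size s).+1, 2))%N.
Proof.
elim: s t => [|y s IH] t //; rewrite nsol2_cons /= binS bin1.
by have := IH t; have := nsol1_le s (t - y); case: eqP => _; lia.
Qed.

Lemma card_nsol n (a : 'I_n -> R) d t :
  #|[set m : {ffun 'I_n -> 'I_4} |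
     (\sum_i (m i : nat) == d) && (wsum a [ffun i => (m i : nat)] == t)]|
  = nsol [seq a i | i <- enum 'I_n] d t.
Proof.
rewrite -sum1_card big_mkcond /=.
elim: n a d t => [|n IH] a d t.
  rewrite enum_ord0 /=; under eq_bigr do rewrite inE /wsum !big_ord0.
  by rewrite sum_nat_const card_ffun !card_ord mul1n eq_sym [0 == t]eq_sym.
rewrite big_ffunS enum_ordSl /= -map_comp [in RHS]big_mkcond /=.
apply: eq_bigr => e _.
have sumS g : (\sum_i (ffun_cons e g i : nat) = e + \sum_j (g j : nat))%N.
  rewrite big_ord_recl ffun_cons0; congr (_ + _).
  by apply: eq_bigr => j _; rewrite ffun_consS.
have wsumS g : wsum a [ffun i => (ffun_cons e g i : nat)]
    = (e : nat)%:R * a ord0 + wsum (a \o lift ord0) [ffun j => (g j : nat)].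
  rewrite /wsum big_ord_recl ffunE ffun_cons0; congr (_ + _).
  by apply: eq_bigr => j _; rewrite ffunE ffun_consS ffunE.
under eq_bigr do rewrite inE sumS wsumS.
case: leqP => [e_le_d|d_lt_e]; last first.
  rewrite big1 // => g _; rewrite (_ : (e + _ == d)%N = false) //.
  by apply/negbTE/eqP; lia.
rewrite -IH; apply: eq_bigr => g _; rewrite inE; congr (nat_of_bool (_ && _)).
  by rewrite -[in RHS](eqn_add2l e) subnKC.
by apply/eqP/eqP => [<-|->]; rewrite addrC ?addKr ?subrK.
Qed.
End SolutionCount.

(* lia compares atoms syntactically, while the real arguments of [nsol] and
   the tests [_ == _] may carry different (convertible) structure instances:
   abstract them first. *)
Ltac nsol_lia :=
  repeat match goal with
  | |- context [nsol ?s ?d ?t] => move: (nsol s d t) => ?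
  | |- context [size ?s] => move: (size s) => ?
  | |- context [nat_of_bool (?x == ?y)] =>
      have := leq_b1 (x == y); move: (nat_of_bool (x == y)) => ?
  end; lia.

Lemma prop_in_cons (T : eqType) (P : T -> Prop) y s :
  {in y :: s, forall z, P z} -> P y /\ {in s, forall z, P z}.
Proof.
by move=> Ps; split => [|z zs]; apply: Ps; rewrite inE ?eqxx ?zs ?orbT.
Qed.

Section Signs.
Variable R : realFieldType.
Implicit Types (s l p b : seq R) (d : nat) (t x y : R).

Lemma nsol_nonneg s d t : {in s, forall y, 0 <= y} -> t < 0 -> nsol s d t = 0%N.
Proof.
elim: s d t => [|y s IH] d t /=; first by move=> _ /lt_eqF ->; rewrite andbF.
case/prop_in_cons => y_ge0 s_ge0 t_lt0; rewrite big1 // => e _; apply: IH => //.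
have : 0 <= (e : nat)%:R * y by rewrite mulr_ge0.
lra.
Qed.

Lemma nsol_neg s d t :
  {in s, forall y, y < 0} -> 0 <= t -> (0 < d)%N -> nsol s d t = 0%N.
Proof.
elim: s d t => [|y s IH] [|d] t //= /prop_in_cons[y_lt0 s_lt0] t_ge0 _.
rewrite big1 // => -[[|e] he] /= e_le; rewrite ?subn0.
  by rewrite IH // mul0r subr0.
have : (e.+1)%:R * y < 0 by rewrite pmulr_rlt0.
case: (ltnP e d) => [lt_ed|le_de] yneg.
  by rewrite IH ?subn_gt0 //; lra.
have -> : (d.+1 - e.+1 = 0)%N by lia.
by rewrite nsol0 gt_eqF //; lra.
Qed.

(* The cubic monomials x m and x^2 m of weight 0, where the new variable x has
   weight x and m is a monomial in variables weighted by s. *)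
Definition nmixed x s := (nsol s 2 (- x) + nsol s 1 (- (2%:R * x)))%N.

Lemma nsol3_rem s x : x \in s ->
  nsol s 3 0 = (nsol (rem x s) 3 0%R + nmixed x (rem x s) + (x == 0)%R)%N.
Proof.
move=> xs; rewrite (nsol_perm (perm_to_rem xs)) nsol3_cons /nmixed !sub0r.
by rewrite eq_sym mulf_eq0 pnatr_eq0 !addnA.
Qed.

Lemma nmixed_cons x y s : nmixed x (y :: s) = (nmixed x s
  + nsol s 1 (- x - y)%R + ((- x == 2%:R * y)%R + (y == - (2%:R * x))%R))%N.
Proof. by rewrite /nmixed nsol2_cons !nsol1 /=; ring. Qed.

Lemma nmixed_le x s : 0 < x -> (nmixed x s <= 'C((size s).+1, 2))%N.
Proof.
move=> x_gt0; elim: s => [|y s IH] //; rewrite nmixed_cons /= binS bin1.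
have := nsol1_le s (- x - y).
have : ((- x == 2%:R * y)%R + (y == - (2%:R * x))%R <= 1)%N.
  by case: eqP => [?|_]; case: eqP => [?|_] //; lra.
by move: IH; nsol_lia.
Qed.

Lemma nsol1_lt_size s t v : v \in s -> v != t -> (nsol s 1 t < size s)%N.
Proof.
move=> vs vt; rewrite nsol1 -(count_predC (pred1 t) s) -[X in (X < _)%N]addn0.
by rewrite ltn_add2l -has_count; apply/hasP; exists v.
Qed.

Lemma nmixed_pos_le x l p : 0 < x ->
  {in l, forall y, y < 0} -> {in p, forall y, 0 <= y} -> p != [::] ->
  (nmixed x (l ++ p) + 'C((size p).+1, 2) + size l
     <= 'C((size (l ++ p)).+1, 2) + (l != [::]))%N.
Proof.
move=> x_gt0 + p_ge0 p_nil.
have [v vp] : exists v, v \in p.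
  by case: p p_nil {p_ge0} => // v p _; exists v; rewrite mem_head.
have v_ge0 : 0 <= v by rewrite p_ge0.
elim: l => [_|y l IH /prop_in_cons[y_lt0 l_lt0]].
  by rewrite /= /nmixed !nsol_nonneg ?addn0 //; lra.
have {IH} := IH l_lt0.
rewrite cat_cons nmixed_cons /= (binS (size (l ++ p)).+1 1) bin1.
suff : (nsol (l ++ p) 1 (- x - y)%R
          + ((- x == 2%:R * y)%R + (y == - (2%:R * x))%R)
          <= size (l ++ p) + (l == [::]))%N by case: (l == [::]); lia.
(* At most one test holds, and then some entry of l ++ p misses the weight
   - x - y: v if x + 2 y = 0 (the weight is y < 0), a negative z if
   y + 2 x = 0 (the weight is x > 0); for l = [::] the slack is used. *)
have := nsol1_le (l ++ p) (- x - y).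
case: eqP => [x2y|_]; case: eqP => [y2x|_] /=.
- lra.
- have w_lt_v : - x - y < v by lra.
  have vlp : v \in l ++ p by rewrite mem_cat vp orbT.
  have := nsol1_lt_size vlp (negbT (gt_eqF w_lt_v)).
  by case: (l == [::]); lia.
- case: l l_lt0 => [_|z l l_lt0]; first by rewrite eqxx; lia.
  have z_lt_w : z < - x - y by have := l_lt0 z (mem_head _ _); lra.
  have := nsol1_lt_size (mem_head z (l ++ p)) (negbT (lt_eqF z_lt_w)).
  by nsol_lia.
- by case: (l == [::]); lia.
Qed.

Lemma nmixed0_le l p : {in l, forall y, y < 0} -> {in p, forall y, y = 0} ->
  (nmixed 0 (l ++ p) + size l * (size p).+1
     <= 'C((size (l ++ p)).+1, 2) + size p)%N.
Proof.
move=> + p0; elim: l => [_|y l IH /prop_in_cons[y_lt0 l_lt0]].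
  have := nsol2_le p (- 0); have := nsol1_le p (- (2%:R * 0)).
  by rewrite /nmixed mul0n addn0 /=; nsol_lia.
have {IH} := IH l_lt0.
rewrite cat_cons nmixed_cons /= (binS (size (l ++ p)).+1 1) bin1 mulSn.
have -> : nsol (l ++ p) 1 (- 0 - y) = 0%N.
  rewrite nsol1; apply/count_memPn; rewrite mem_cat.
  by apply/negP => /orP[/l_lt0|/p0]; lra.
have [-> ->] : (- 0 == 2%:R * y) = false /\ (y == - (2%:R * 0)) = false.
  by split; apply/negbTE/eqP; lra.
by rewrite size_cat; nsol_lia.
Qed.

Lemma nmixed_neg_le x b : 0 <= x -> {in b, forall y, y < 0} -> b != [::] ->
  (nmixed x b + (x == 0)%R <= 'C((size b).+1, 2))%N.
Proof.
move=> x_ge0 b_lt0 b_nil; have [->|x_neq0] := eqVneq x 0.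
  have -> : nmixed 0 b = 0%N by rewrite /nmixed !nsol_neg // ?mulr0 oppr0.
  by rewrite add0n /= bin_gt0; case: b b_nil {b_lt0}.
by rewrite addn0 nmixed_le // lt_def x_neq0.
Qed.

Definition nneg s := count (< 0) s.

Lemma nmixed_max_le x b : 0 <= x -> {in b, forall y, y <= x} ->
  (2 <= nneg b < size b)%N ->
  (nmixed x b + (x == 0)%R + nneg b <= 'C((size b).+1, 2))%N.
Proof.
move=> x_ge0 b_le_x /andP[k_ge2 k_lt_n].
set l : seq R := filter (< 0) b; set p : seq R := filter (predC (< 0)) b.
have lp_b : perm_eq (l ++ p) b by rewrite perm_filterC.
have l_lt0 : {in l, forall y, y < 0} by move=> y; rewrite mem_filter => /andP[].
have p_ge0 : {in p, forall y, 0 <= y}.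
  by move=> y; rewrite mem_filter /= -leNgt => /andP[].
have size_l : size l = nneg b by rewrite size_filter.
have size_p : size p = (size b - nneg b)%N.
  by rewrite size_filter -(count_predC (< 0) b) addKn.
have <- : nmixed x (l ++ p) = nmixed x b by rewrite /nmixed !(nsol_perm lp_b).
rewrite -(perm_size lp_b) -size_l.
have [x0|x_neq0] := eqVneq x 0.
  have p0 : {in p, forall y, y = 0}.
    move=> y yp; apply/eqP; rewrite eq_le -{1}x0 p_ge0 // andbT b_le_x //.
    by move: yp; rewrite mem_filter => /andP[].
  have := nmixed0_le l_lt0 p0; rewrite x0 size_cat size_p size_l.
  move: k_ge2 k_lt_n; move: (nmixed _ _) (nneg b) (size b) => N k n; nia.
have x_gt0 : 0 < x by rewrite lt_def x_neq0.
have p_nil : p != [::] by rewrite -size_eq0 size_p; lia.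
have : (0 < 'C((size p).+1, 2))%N by rewrite bin_gt0 ltnS lt0n size_eq0.
by have := nmixed_pos_le x_gt0 l_lt0 p_ge0 p_nil; case: (l != [::]); nsol_lia.
Qed.
End Signs.

Definition zbound (n k : nat) : int :=
  ('C(n.+1, 3))%:Z - (n * k)%:Z + n%:Z + cst n.

Lemma bin3_mul6 n : ('C(n.+1, 3) * 6 = n.+1 * n * n.-1)%N.
Proof. by rewrite (bin_ffact n.+1 3) !ffactnS ffactn0 muln1 mulnA. Qed.

Lemma bin2_mul2 n : ('C(n.+1, 2) * 2 = n.+1 * n)%N.
Proof. by rewrite (bin_ffact n.+1 2) !ffactnS ffactn0 muln1. Qed.

Lemma zbound_diag n : (2 <= n)%N -> 0 <= zbound n n.
Proof.
rewrite /zbound /cst => n_ge2.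
do 3 (case: eqP => [-> //|_]).
have := bin3_mul6 n; have : (0 <= n * ((n - 5) * (n - 5)))%N by [].
move: ('C(n.+1, 3)) => C; nia.
Qed.

Lemma bin2_le_zbound n : (2 <= n)%N -> ('C(n.+1, 2))%:Z <= zbound n.+1 n.
Proof.
rewrite /zbound /cst => n_ge2.
have [n_le6|n_gt6] := leqP n 6.
  by case: n n_ge2 n_le6 => [|[|[|[|[|[|[|n]]]]]]].
have := bin3_mul6 n.+1; have := bin2_mul2 n.
have : (7 * (n.+1 * n) <= n.+1 * n * n)%N.
  by rewrite [X in (_ <= X)%N]mulnC leq_mul2r n_gt6 orbT.
do 3 (case: eqP => [?|_]; first by lia).
move: ('C(n.+2, 3)) ('C(n.+1, 2)) => C D; lia.
Qed.

Lemma zbound_step n k : (3 <= n)%N ->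
  zbound n k + ('C(n.+1, 2))%:Z - k%:Z <= zbound n.+1 k.
Proof.
move=> n_ge3; have cst_step : cst n <= cst n.+1 + 1.
  by rewrite /cst; case: n n_ge3 => [|[|[|[|[|n]]]]] //= _; lia.
rewrite /zbound (binS n.+1 2); move: cst_step; lia.
Qed.

Lemma nsol3_le_zbound (R : realFieldType) (s : seq R) :
  (2 <= size s)%N -> (2 <= nneg s)%N ->
  (nsol s 3 0)%:Z <= zbound (size s) (nneg s).
Proof.
move sn : (size s) => n; elim: n s sn => [|n IH] s size_s // n_ge2 k_ge2.
have [all_neg|] := boolP (all (< 0) s).
  rewrite nsol_neg //; last exact/allP.
  move: all_neg; rewrite all_count size_s -/(nneg s) => /eqP ->.
  exact: zbound_diag.
case/allPn => v vs; rewrite -leNgt => v_ge0.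
have [x xs x_max] : exists2 x, x \in s & {in s, forall y, y <= x}.
  exists (\big[Order.max/v]_(y <- s) y).
    rewrite big_seq; elim/big_rec: _ => // y z ys zs.
    by rewrite maxEle; case: ifP.
  by move=> y ys; rewrite le_bigmax_seq.
have x_ge0 : 0 <= x := le_trans v_ge0 (x_max v vs).
set b := rem x s; rewrite (nsol3_rem xs) -/b.
have size_b : size b = n by rewrite size_rem // size_s.
have nneg_b : nneg b = nneg s.
  by rewrite /nneg (permP (perm_to_rem xs)) /= ltNge x_ge0.
have b_le_x : {in b, forall y, y <= x} by move=> y /mem_rem; apply: x_max.
have [b_neg|b_nonneg] := eqVneq (nneg b) n.
  have b_lt0 : {in b, forall y, y < 0}.
    by apply/allP; rewrite all_count -/(nneg b) b_neg size_b.
  have b_nil : b != [::] by rewrite -size_eq0 size_b -b_neg -lt0n; lia.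
  rewrite nsol_neg // add0n -nneg_b b_neg.
  apply: le_trans (bin2_le_zbound _); last by rewrite -b_neg nneg_b.
  by rewrite lez_nat -size_b nmixed_neg_le.
have k_lt_n : (nneg b < n)%N by rewrite ltn_neqAle b_nonneg -size_b count_size.
have n_ge3 : (3 <= n)%N by rewrite -nneg_b in k_ge2; lia.
have IHb := IH b size_b (ltnW n_ge3); rewrite nneg_b in IHb.
have k_range : (2 <= nneg b < size b)%N by rewrite nneg_b k_ge2 -nneg_b size_b.
have := nmixed_max_le x_ge0 b_le_x k_range; rewrite size_b nneg_b => mixed_le.
apply: le_trans (zbound_step _ n_ge3).
by move: (IHb k_ge2) mixed_le; lia.
Qed.

Lemma Zdeg_Jmul2_linvec (R : numDomainType) n (a : 'I_n -> R) :
  Zdeg 3 (Jmul (Jmul (linvec a))) = nsol [seq a i | i <- enum 'I_n] 3 0.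
Proof.
rewrite /Zdeg -card_nsol; apply: eq_card => m; rewrite !inE.
case: eqP => //= sum_m; rewrite Jmul2_linvec_eq0 //.
by rewrite -[RHS]sum_m; apply: eq_bigr => i _; rewrite ffunE.
Qed.

Lemma Nneg_nneg (R : realFieldType) n (a : 'I_n -> R) :
  Nneg a = nneg [seq a i | i <- enum 'I_n].
Proof. by rewrite /Nneg /nneg count_map cardsE cardE size_filter enumT. Qed.

Theorem lemma3p2 (R : realType) (n : nat) (a : 'I_n -> R) :
  (2 <= n)%N -> (2 <= Nneg a)%N ->
  ((Zdeg 3 (Jmul (Jmul (linvec a))))%:Z
     <= ('C(n.+1, 3))%:Z - (n * Nneg a)%:Z + n%:Z + cst n)%R.
Proof.
move=> n_ge2 k_ge2; rewrite Zdeg_Jmul2_linvec Nneg_nneg.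
have := @nsol3_le_zbound R [seq a i | i <- enum 'I_n].
by rewrite size_map size_enum_ord -Nneg_nneg; apply.
Qed.
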